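(* Let $(M,F)$ be a conic pseudo-Finsler surface which is Landsberg, and let $f$ be a smooth $h(0)$ function on $\mathcal A$. If $f$ is horizontally constant, then $f_{;2}$ and $f_{;2;2}$ are horizontally constant.
   Context: Throughout, $M$ is a smooth $2$-dimensional manifold, $TM_0$ its slit tangent bundle with induced local coordinates $(x^i,y^i)$, $\partial_i=\partial/\partial x^i$, $\dot\partial_i=\partial/\partial y^i$. A function is called $h(r)$ if it is positively homogeneous of degree $r$ in $y$. A conic pseudo-Finsler surface $(M,F)$ consists of a conic subbundle $\mathcal A\subset TM_0$ (an open set invariant under $y\mapsto\lambda y$, $\lambda>0$, projecting onto $M$) and a smooth $h(1)$ function $F:\mathcal A\to\mathbb R$ such that $g_{ij}=\frac12\dot\partial_i\dot\partial_jF^2$ is nondegenerate. Put $\ell_i=\dot\partial_iF$, $\ell^i=y^i/F$. Modified Berwald frame: $\varepsilon\in\{1,-1\}$ and a covector $m_i$ satisfy $g_{ij}=\ell_i\ell_j+\varepsilon m_im_j$, $m^i=g^{ij}m_j$, so $\ell^i\ell_i=1$, $\ell^im_i=0$, $m^im_i=\varepsilon$. The main scalar $\mathcal I$ ($h(0)$) is defined by $FC_{ijk}=\mathcal I\,m_im_jm_k$, where $C_{ijk}=\frac14\dot\partial_i\dot\partial_j\dot\partial_kF^2$. The geodesic spray of $F$ is $S=y^i\partial_i-2G^i\dot\partial_i$; $G^i_j=\dot\partial_jG^i$, $\delta_i=\partial_i-G^j_i\dot\partial_j$. For a smooth function $f$: $f_{;1}=y^i\dot\partial_if$, $f_{;2}=\varepsilon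 Fm^i\dot\partial_if$, $f_{,1}=\ell^i\delta_if$, $f_{,2}=\varepsilon m^i\delta_if$; iterated derivatives are read left to right, e.g. $f_{;2;2}=(f_{;2})_{;2}$. $f$ is horizontally constant if $\delta_if=0$ (i.e. $f_{,1}=f_{,2}=0$). $F$ is Landsberg if $\mathcal I_{,1}=0$. *)

(* Local (chart) formalization of a conic
   pseudo-Finsler surface: a point of TM is (x1,x2,y1,y2) in R^4. *)
From Stdlib Require Import Reals.
From Coquelicot Require Import Coquelicot.
Open Scope R_scope.

Definition pt : Type := (R * R * R * R)%type.

Inductive I2 : Type := i1 | i2.

Definition xc (i : I2) (p : pt) : R :=
  let '(x1, x2, _, _) := p in match i with i1 => x1 | i2 => x2 end.
Definition yc (i : I2) (p : pt) : R :=
  let '(_, _, y1, y2) := p in match i with i1 => y1 | i2 => y2 end.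

Definition setx (i : I2) (p : pt) (t : R) : pt :=
  let '(x1, x2, y1, y2) := p in
  match i with i1 => (t, x2, y1, y2) | i2 => (x1, t, y1, y2) end.
Definition sety (i : I2) (p : pt) (t : R) : pt :=
  let '(x1, x2, y1, y2) := p in
  match i with i1 => (x1, x2, t, y2) | i2 => (x1, x2, y1, t) end.

Definition scale (l : R) (p : pt) : pt :=
  let '(x1, x2, y1, y2) := p in (x1, x2, l * y1, l * y2).

Definition sum2 (h : I2 -> R) : R := h i1 + h i2.

Definition dx (i : I2) (f : pt -> R) (p : pt) : R :=
  Derive (fun t => f (setx i p t)) (xc i p).
Definition dy (i : I2) (f : pt -> R) (p : pt) : R :=
  Derive (fun t => f (sety i p t)) (yc i p).

Fixpoint Ck (k : nat) (A : pt -> Prop) (f : pt -> R) : Prop :=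
  match k with
  | O => forall p, A p -> continuous f p
  | S k' => (forall p, A p -> continuous f p) /\
      (forall i p, A p -> ex_derive (fun t => f (setx i p t)) (xc i p)
                       /\ ex_derive (fun t => f (sety i p t)) (yc i p)) /\
      (forall i, Ck k' A (dx i f) /\ Ck k' A (dy i f))
  end.
Definition smooth_on (A : pt -> Prop) (f : pt -> R) : Prop := forall k, Ck k A f.

Definition homog (A : pt -> Prop) (r : nat) (f : pt -> R) : Prop :=
  forall p l, A p -> 0 < l -> f (scale l p) = l ^ r * f p.

Definition conic (A : pt -> Prop) : Prop :=
  open A /\ (forall p, A p -> (yc i1 p <> 0 \/ yc i2 p <> 0)) /\
  (forall p l, A p -> 0 < l -> A (scale l p)).

Section Finsler.
Variable F : pt -> R.

Definition F2 (p : pt) : R := F p ^ 2.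
Definition g (i j : I2) (p : pt) : R := / 2 * dy i (dy j F2) p.
Definition detg (p : pt) : R := g i1 i1 p * g i2 i2 p - g i1 i2 p * g i2 i1 p.
Definition ginv (i j : I2) (p : pt) : R :=
  match i, j with
  | i1, i1 => g i2 i2 p / detg p
  | i2, i2 => g i1 i1 p / detg p
  | i1, i2 => - g i1 i2 p / detg p
  | i2, i1 => - g i2 i1 p / detg p
  end.
Definition ell_low (i : I2) (p : pt) : R := dy i F p.
Definition ell_up (i : I2) (p : pt) : R := yc i p / F p.
Definition Cart (i j k : I2) (p : pt) : R := / 4 * dy i (dy j (dy k F2)) p.
(* geodesic spray coefficients: S = y^i d_i - 2 G^i dot-d_i *)
Definition Gs (i : I2) (p : pt) : R :=
  / 4 * sum2 (fun l => ginv i l p *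
      (sum2 (fun k => yc k p * dx k (dy l F2) p) - dx l F2 p)).
Definition Gij (i j : I2) (p : pt) : R := dy j (Gs i) p.
Definition delta (i : I2) (f : pt -> R) (p : pt) : R :=
  dx i f p - sum2 (fun j => Gij j i p * dy j f p).

Section Frame.
Variables (eps : R) (m : I2 -> pt -> R).
Definition mup (i : I2) (p : pt) : R := sum2 (fun j => ginv i j p * m j p).
(* f_{;2} = eps F m^i dot-d_i f *)
Definition semi2 (f : pt -> R) (p : pt) : R :=
  eps * F p * sum2 (fun i => mup i p * dy i f p).
Definition comma1 (f : pt -> R) (p : pt) : R :=
  sum2 (fun i => ell_up i p * delta i f p).
End Frame.
End Finsler.

Definition pseudo_finsler (A : pt -> Prop) (F : pt -> R) : Prop :=
  conic A /\ smooth_on A F /\ homog A 1 F /\ (forall p, A p -> detg F p <> 0).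

Definition berwald_frame (A : pt -> Prop) (F : pt -> R) (eps : R)
  (m : I2 -> pt -> R) (I : pt -> R) : Prop :=
  (eps = 1 \/ eps = -1) /\ (forall i, smooth_on A (m i)) /\ smooth_on A I /\
  (forall p i j, A p ->
     g F i j p = ell_low F i p * ell_low F j p + eps * m i p * m j p) /\
  (forall p i j k, A p -> F p * Cart F i j k p = I p * m i p * m j p * m k p).

Definition horiz_const (A : pt -> Prop) (F : pt -> R) (f : pt -> R) : Prop :=
  forall p i, A p -> delta F i f p = 0.

(* On a Landsberg surface the Berwald connection is metric.  Differentiating
   [y^k g_ij|k = 0] vertically gives [g_ij|k = -2 C_kij|0].  In the modified Berwald
   frame, [C_hij|0] only involves [I_,1] and [m_a|0], and [g = l l + eps m m] with
   [l_i|k = 0] (as [F] is horizontally constant) turns [y^k g_ij|k = 0] into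
   [m_a|0 = 0].  Hence [g_ij|k = 0], so [m_a] and [m^a] are parallel.  Since [delta_k]
   commutes with vertical derivatives up to the connection term, for every
   horizontally constant [f] we get
   [delta_k f_;2 = eps F m^i_|k dy_i f + eps F m^i dy_i (delta_k f) = 0];
   applying this twice proves the theorem.
   The analytic inputs are Schwarz's theorem and Euler's theorem on homogeneous
   functions. *)

From Stdlib Require Import Reals Lra.
From Coquelicot Require Import Coquelicot.
Open Scope R_scope.

Inductive dir : Type := DX (i : I2) | DY (i : I2).

Definition cd (d : dir) (p : pt) : R :=
  match d with DX i => xc i p | DY i => yc i p end.
Definition setd (d : dir) (p : pt) (t : R) : pt :=
  match d with DX i => setx i p t | DY i => sety i p t end.
(* [dd (DX i)] and [dd (DY i)] are convertible to [dx i] and [dy i]. *)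
Definition dd (d : dir) (u : pt -> R) (p : pt) : R :=
  Derive (fun t => u (setd d p t)) (cd d p).

Implicit Types (u v w : pt -> R) (p q : pt) (d e : dir).

Lemma dir_eq_dec (d e : dir) : {d = e} + {d <> e}.
Proof. decide equality; decide equality. Defined.

Lemma setd_cd d p : setd d p (cd d p) = p.
Proof. destruct p as [[[a b] c] e]; destruct d as [[]|[]]; reflexivity. Qed.

Lemma cd_setd d p t : cd d (setd d p t) = t.
Proof. destruct p as [[[a b] c] e]; destruct d as [[]|[]]; reflexivity. Qed.

Lemma setd_setd d p s t : setd d (setd d p s) t = setd d p t.
Proof. destruct p as [[[a b] c] e]; destruct d as [[]|[]]; reflexivity. Qed.

Lemma cd_setd_neq d e p t : d <> e -> cd e (setd d p t) = cd e p.
Proof.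
  destruct p as [[[a b] c] f]; destruct d as [[]|[]]; destruct e as [[]|[]];
    intros H; try reflexivity; congruence.
Qed.

Lemma setd_comm d e p s t : d <> e -> setd d (setd e p s) t = setd e (setd d p t) s.
Proof.
  destruct p as [[[a b] c] f]; destruct d as [[]|[]]; destruct e as [[]|[]];
    intros H; try reflexivity; congruence.
Qed.

Lemma cd_setd_if d e p t : cd e (setd d p t) = if dir_eq_dec d e then t else cd e p.
Proof. destruct (dir_eq_dec d e) as [<-|Hde]; [apply cd_setd | now apply cd_setd_neq]. Qed.

Lemma setd_swap d e p s t z : d <> e ->
  setd d (setd e (setd d p s) t) z = setd e (setd d p z) t.
Proof. intros Hde. rewrite setd_comm by exact Hde. now rewrite setd_setd. Qed.

Lemma cd_setd_swap d e p s t : d <> e -> cd d (setd e (setd d p s) t) = s.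
Proof. intros Hde. rewrite cd_setd_neq by (now apply not_eq_sym). apply cd_setd. Qed.

Lemma ball_pt_iff (p q : pt) (r : R) :
  ball p r q <-> (forall d, Rabs (cd d q - cd d p) < r).
Proof.
  destruct p as [[[a b] c] e]; destruct q as [[[a' b'] c'] e'].
  cbn. unfold prod_ball, AbsRing_ball, abs, minus, plus, opp; cbn.
  split.
  - intros [[[H1 H2] H3] H4] [[]|[]]; cbn; auto.
  - intros H. repeat split.
    + apply (H (DX i1)).
    + apply (H (DX i2)).
    + apply (H (DY i1)).
    + apply (H (DY i2)).
Qed.

Lemma setd_near d p s x r c : 0 < r -> Rabs (s - x) < r ->
  Rabs (cd c (setd d p s) - cd c (setd d p x)) < r.
Proof.
  intros Hr Hs. rewrite !cd_setd_if. destruct (dir_eq_dec d c); [exact Hs|].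
  now rewrite Rminus_eq_0, Rabs_R0.
Qed.

Lemma setd2_near d e p s t x y r c : 0 < r -> Rabs (s - x) < r -> Rabs (t - y) < r ->
  Rabs (cd c (setd e (setd d p s) t) - cd c (setd e (setd d p x) y)) < r.
Proof.
  intros Hr Hs Ht. rewrite !(cd_setd_if e). destruct (dir_eq_dec e c); [exact Ht|].
  now apply setd_near.
Qed.

Lemma continuous_slice (w : pt -> R) d e p x y :
  continuous w (setd e (setd d p x) y) ->
  continuous (fun z : R * R => w (setd e (setd d p (fst z)) (snd z))) (x, y).
Proof.
  intros Hw. eapply filterlim_comp; [|exact Hw].
  apply filterlim_locally. intros r. exists r. intros [s t] [Hs Ht].
  apply ball_pt_iff. intros c. now apply setd2_near; [apply cond_pos| |].
Qed.

Section Open.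
Variable A : pt -> Prop.
Hypothesis HA : open A.

Lemma locally_line d p : A p -> locally (cd d p) (fun t => A (setd d p t)).
Proof.
  intros Hp. destruct (HA p Hp) as [r Hr]. exists r. intros t Ht.
  apply Hr, ball_pt_iff. intros c. rewrite <- (setd_cd d p) at 2.
  apply setd_near; [apply cond_pos | exact Ht].
Qed.

Lemma locally_2d_slice d e p : A p ->
  locally_2d (fun s t => A (setd e (setd d p s) t)) (cd d p) (cd e p).
Proof.
  intros Hp. destruct (HA p Hp) as [r Hr]. exists r. intros s t Hs Ht.
  apply Hr, ball_pt_iff. intros c.
  replace (cd c p) with (cd c (setd e (setd d p (cd d p)) (cd e p))) by now rewrite !setd_cd.
  apply setd2_near; [apply cond_pos | exact Hs | exact Ht].
Qed.

Lemma dd_ext_loc u v d p : (forall q, A q -> u q = v q) -> A p -> dd d u p = dd d v p.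
Proof.
  intros Huv Hp. apply Derive_ext_loc.
  apply (filter_imp (fun t => A (setd d p t))); [intros t Ht; now apply Huv|].
  now apply locally_line.
Qed.

Lemma continuous_ext_open u v p : (forall q, A q -> u q = v q) -> A p ->
  continuous u p -> continuous v p.
Proof.
  intros Huv Hp. apply continuous_ext_loc.
  apply (filter_imp A); [exact Huv | exact (HA p Hp)].
Qed.

Lemma ex_derive_ext_open u v d p : (forall q, A q -> u q = v q) -> A p ->
  ex_derive (fun t => u (setd d p t)) (cd d p) -> ex_derive (fun t => v (setd d p t)) (cd d p).
Proof.
  intros Huv Hp. apply ex_derive_ext_loc.
  apply (filter_imp (fun t => A (setd d p t))); [intros t Ht; now apply Huv|].
  now apply locally_line.
Qed.
End Open.

Lemma dd_const d (c : R) p : dd d (fun _ => c) p = 0.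
Proof. unfold dd. apply Derive_const. Qed.

Lemma dd_ext u v d p : (forall q, u q = v q) -> dd d u p = dd d v p.
Proof. intros Huv. unfold dd. apply Derive_ext. intros t. apply Huv. Qed.

Lemma dd_cd d c p : dd d (cd c) p = if dir_eq_dec d c then 1 else 0.
Proof.
  unfold dd. destruct (dir_eq_dec d c) as [<-|Hne].
  - rewrite (Derive_ext _ (fun t => t)) by apply cd_setd. apply Derive_id.
  - rewrite (Derive_ext _ (fun _ => cd c p)) by (intros; now apply cd_setd_neq).
    apply Derive_const.
Qed.

Lemma ex_derive_cd d c p : ex_derive (fun t => cd c (setd d p t)) (cd d p).
Proof.
  destruct (dir_eq_dec d c) as [<-|Hne].
  - apply (ex_derive_ext (fun t => t)); [intros; symmetry; apply cd_setd | apply ex_derive_id].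
  - apply (ex_derive_ext (fun _ => cd c p)); [intros; symmetry; now apply cd_setd_neq|].
    apply ex_derive_const.
Qed.

Lemma continuous_cd c p : continuous (cd c) p.
Proof.
  apply filterlim_locally. intros r. exists r. intros q Hq.
  exact (proj1 (ball_pt_iff p q r) Hq c).
Qed.

Section Ck.
Variable A : pt -> Prop.
Hypothesis HA : open A.

Lemma Ck_S_iff k u : Ck (S k) A u <->
  (forall p, A p -> continuous u p) /\
  (forall d p, A p -> ex_derive (fun t => u (setd d p t)) (cd d p)) /\
  (forall d, Ck k A (dd d u)).
Proof.
  cbn [Ck]. split.
  - intros [Hc [Hd Hk]]. split; [exact Hc|split].
    + intros [i|i] p Hp; apply (Hd i p Hp).
    + intros [i|i]; apply (Hk i).
  - intros [Hc [Hd Hk]]. split; [exact Hc|split].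
    + intros i p Hp. split; [apply (Hd (DX i) p Hp) | apply (Hd (DY i) p Hp)].
    + intros i. split; [apply (Hk (DX i)) | apply (Hk (DY i))].
Qed.

Lemma Ck_ext k : forall u v, (forall q, A q -> u q = v q) -> Ck k A u -> Ck k A v.
Proof.
  induction k as [|k IH]; intros u v Huv Hu.
  - intros p Hp. apply (continuous_ext_open A HA u); auto.
  - apply Ck_S_iff in Hu as [Hc [Hd Hk]]. apply Ck_S_iff. split; [|split].
    + intros p Hp. apply (continuous_ext_open A HA u); auto.
    + intros d p Hp. apply (ex_derive_ext_open A HA u); auto.
    + intros d. apply (IH (dd d u)); [|apply Hk]. intros q Hq. now apply (dd_ext_loc A HA).
Qed.

Lemma Ck_S_Ck k : forall u, Ck (S k) A u -> Ck k A u.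
Proof.
  induction k as [|k IH]; intros u Hu; apply Ck_S_iff in Hu as [Hc [Hd Hk]].
  - exact Hc.
  - apply Ck_S_iff. auto.
Qed.

Lemma Ck_const k (c : R) : Ck k A (fun _ => c).
Proof.
  revert c. induction k as [|k IH]; intros c.
  - intros p _. apply continuous_const.
  - apply Ck_S_iff. split; [|split].
    + intros p _. apply continuous_const.
    + intros d p _. apply ex_derive_const.
    + intros d. apply (Ck_ext k (fun _ => 0)); [|apply IH].
      intros q _. symmetry. apply dd_const.
Qed.

Lemma Ck_cd k c : Ck k A (cd c).
Proof.
  destruct k as [|k].
  - intros p _. apply continuous_cd.
  - apply Ck_S_iff. split; [|split].
    + intros p _. apply continuous_cd.
    + intros d p _. apply ex_derive_cd.
    + intros d. apply (Ck_ext k (fun _ => if dir_eq_dec d c then 1 else 0)); [|apply Ck_const].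
      intros q _. symmetry. apply dd_cd.
Qed.

Lemma Ck_plus k : forall u v, Ck k A u -> Ck k A v -> Ck k A (fun q => u q + v q).
Proof.
  induction k as [|k IH]; intros u v Hu Hv.
  - intros p Hp. apply (continuous_plus u v); auto.
  - apply Ck_S_iff in Hu as [Uc [Ud Uk]]. apply Ck_S_iff in Hv as [Vc [Vd Vk]].
    apply Ck_S_iff. split; [|split].
    + intros p Hp. apply (continuous_plus u v); auto.
    + intros d p Hp.
      apply (ex_derive_plus (fun t => u (setd d p t)) (fun t => v (setd d p t))); auto.
    + intros d. apply (Ck_ext k (fun q => dd d u q + dd d v q)); [|apply IH; auto].
      intros q Hq. symmetry.
      apply (Derive_plus (fun t => u (setd d q t)) (fun t => v (setd d q t))); auto.
Qed.

Lemma Ck_mult k : forall u v, Ck k A u -> Ck k A v -> Ck k A (fun q => u q * v q).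
Proof.
  induction k as [|k IH]; intros u v Hu Hv.
  - intros p Hp. apply (continuous_mult u v); auto.
  - pose proof (Ck_S_Ck _ _ Hu) as Hu'. pose proof (Ck_S_Ck _ _ Hv) as Hv'.
    apply Ck_S_iff in Hu as [Uc [Ud Uk]]. apply Ck_S_iff in Hv as [Vc [Vd Vk]].
    apply Ck_S_iff. split; [|split].
    + intros p Hp. apply (continuous_mult u v); auto.
    + intros d p Hp.
      apply (ex_derive_mult (fun t => u (setd d p t)) (fun t => v (setd d p t))); auto.
    + intros d. apply (Ck_ext k (fun q => dd d u q * v q + u q * dd d v q)).
      * intros q Hq. unfold dd. symmetry.
        rewrite (Derive_mult (fun t => u (setd d q t)) (fun t => v (setd d q t))); auto.
        now rewrite setd_cd.
      * apply Ck_plus; apply IH; auto.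
Qed.

Lemma Ck_inv k : forall u, Ck k A u -> (forall q, A q -> u q <> 0) -> Ck k A (fun q => / u q).
Proof.
  induction k as [|k IH]; intros u Hu Hnz.
  - intros p Hp. apply (continuous_comp u Rinv); [apply Hu, Hp | apply continuous_Rinv, Hnz, Hp].
  - pose proof (Ck_S_Ck _ _ Hu) as Hu'.
    apply Ck_S_iff in Hu as [Uc [Ud Uk]]. apply Ck_S_iff. split; [|split].
    + intros p Hp. apply (continuous_comp u Rinv); [apply Uc, Hp | apply continuous_Rinv, Hnz, Hp].
    + intros d p Hp. apply (ex_derive_inv (fun t => u (setd d p t))); auto.
      rewrite setd_cd. auto.
    + intros d. apply (Ck_ext k (fun q => -1 * dd d u q * (/ u q * / u q))).
      * intros q Hq. unfold dd. rewrite (Derive_inv (fun t => u (setd d q t))); auto;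
          rewrite setd_cd; auto.
        field. auto.
      * apply Ck_mult; [apply Ck_mult; [apply Ck_const | auto] | apply Ck_mult; apply IH; auto].
Qed.
End Ck.

Section Smooth.
Variable A : pt -> Prop.
Hypothesis HA : open A.

Lemma smooth_cont u p : smooth_on A u -> A p -> continuous u p.
Proof. intros Hu Hp. exact (Hu 0%nat p Hp). Qed.

Lemma smooth_ex_derive u d p : smooth_on A u -> A p ->
  ex_derive (fun t => u (setd d p t)) (cd d p).
Proof. intros Hu Hp. apply (proj1 (Ck_S_iff A 0 u) (Hu 1%nat)), Hp. Qed.

Lemma smooth_dd u d : smooth_on A u -> smooth_on A (dd d u).
Proof. intros Hu k. apply (proj1 (Ck_S_iff A k u) (Hu (S k))). Qed.

Lemma smooth_dx u i : smooth_on A u -> smooth_on A (dx i u).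
Proof. apply (smooth_dd u (DX i)). Qed.

Lemma smooth_dy u i : smooth_on A u -> smooth_on A (dy i u).
Proof. apply (smooth_dd u (DY i)). Qed.

Lemma smooth_ext u v : (forall q, A q -> u q = v q) -> smooth_on A u -> smooth_on A v.
Proof. intros Huv Hu k. exact (Ck_ext A HA k u v Huv (Hu k)). Qed.

Lemma smooth_const (c : R) : smooth_on A (fun _ => c).
Proof. intros k. apply Ck_const, HA. Qed.

Lemma smooth_yc i : smooth_on A (yc i).
Proof. intros k. exact (Ck_cd A HA k (DY i)). Qed.

Lemma smooth_plus u v : smooth_on A u -> smooth_on A v -> smooth_on A (fun q => u q + v q).
Proof. intros Hu Hv k. apply Ck_plus; auto. Qed.

Lemma smooth_mult u v : smooth_on A u -> smooth_on A v -> smooth_on A (fun q => u q * v q).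
Proof. intros Hu Hv k. apply Ck_mult; auto. Qed.

Lemma smooth_inv u : smooth_on A u -> (forall q, A q -> u q <> 0) ->
  smooth_on A (fun q => / u q).
Proof. intros Hu Hnz k. apply Ck_inv; auto. Qed.

Lemma smooth_opp u : smooth_on A u -> smooth_on A (fun q => - u q).
Proof.
  intros Hu. apply (smooth_ext (fun q => -1 * u q)); [intros; ring|].
  apply smooth_mult; [apply smooth_const | exact Hu].
Qed.

Lemma smooth_minus u v : smooth_on A u -> smooth_on A v -> smooth_on A (fun q => u q - v q).
Proof. intros Hu Hv. apply smooth_plus; [exact Hu | now apply smooth_opp]. Qed.

Lemma smooth_div u v : smooth_on A u -> smooth_on A v -> (forall q, A q -> v q <> 0) ->
  smooth_on A (fun q => u q / v q).
Proof. intros Hu Hv Hnz. apply smooth_mult; [exact Hu | now apply smooth_inv]. Qed.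

Lemma smooth_sum2 (w : I2 -> pt -> R) : (forall i, smooth_on A (w i)) ->
  smooth_on A (fun q => sum2 (fun i => w i q)).
Proof. intros Hw. apply smooth_plus; apply Hw. Qed.

Lemma dd_plus u v d p : smooth_on A u -> smooth_on A v -> A p ->
  dd d (fun q => u q + v q) p = dd d u p + dd d v p.
Proof.
  intros Hu Hv Hp. unfold dd.
  apply (Derive_plus (fun t => u (setd d p t)) (fun t => v (setd d p t)));
    now apply smooth_ex_derive.
Qed.

Lemma dd_mult u v d p : smooth_on A u -> smooth_on A v -> A p ->
  dd d (fun q => u q * v q) p = dd d u p * v p + u p * dd d v p.
Proof.
  intros Hu Hv Hp. unfold dd.
  rewrite (Derive_mult (fun t => u (setd d p t)) (fun t => v (setd d p t)))
    by now apply smooth_ex_derive.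
  now rewrite setd_cd.
Qed.

Lemma dd_scal (c : R) u d p : dd d (fun q => c * u q) p = c * dd d u p.
Proof. unfold dd. apply Derive_scal. Qed.

Lemma dd_opp u d p : dd d (fun q => - u q) p = - dd d u p.
Proof. unfold dd. apply Derive_opp. Qed.

Lemma dd_minus u v d p : smooth_on A u -> smooth_on A v -> A p ->
  dd d (fun q => u q - v q) p = dd d u p - dd d v p.
Proof.
  intros Hu Hv Hp. unfold Rminus.
  rewrite dd_plus by (auto using smooth_opp). now rewrite dd_opp.
Qed.

Lemma dd_inv u d p : smooth_on A u -> A p -> u p <> 0 ->
  dd d (fun q => / u q) p = - dd d u p / u p ^ 2.
Proof.
  intros Hu Hp Hnz. unfold dd.
  rewrite (Derive_inv (fun t => u (setd d p t))); rewrite ?setd_cd; auto.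
  now apply smooth_ex_derive.
Qed.

Lemma dd_sum2 (w : I2 -> pt -> R) d p : (forall i, smooth_on A (w i)) -> A p ->
  dd d (fun q => sum2 (fun i => w i q)) p = sum2 (fun i => dd d (w i) p).
Proof. intros Hw Hp. apply dd_plus; auto. Qed.

Lemma dd_zero u d p : (forall q, A q -> u q = 0) -> A p -> dd d u p = 0.
Proof. intros Hu Hp. rewrite (dd_ext_loc A HA u (fun _ => 0)) by auto. apply dd_const. Qed.

Lemma Derive_slice_fst u d e p s t : d <> e ->
  Derive (fun z => u (setd e (setd d p z) t)) s = dd d u (setd e (setd d p s) t).
Proof.
  intros Hde. unfold dd. rewrite cd_setd_swap by exact Hde.
  apply Derive_ext. intros z. now rewrite setd_swap.
Qed.

Lemma Derive_slice_snd u d e p s t :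
  Derive (fun z => u (setd e (setd d p s) z)) t = dd e u (setd e (setd d p s) t).
Proof. unfold dd. rewrite cd_setd. apply Derive_ext. intros z. now rewrite setd_setd. Qed.

Lemma ex_derive_slice_fst u d e p s t : smooth_on A u -> d <> e ->
  A (setd e (setd d p s) t) -> ex_derive (fun z => u (setd e (setd d p z) t)) s.
Proof.
  intros Hu Hde Hq. pose proof (smooth_ex_derive u d _ Hu Hq) as H.
  rewrite cd_setd_swap in H by exact Hde.
  eapply ex_derive_ext; [|exact H]. intros z. cbv beta. now rewrite setd_swap.
Qed.

Lemma ex_derive_slice_snd u d e p s t : smooth_on A u ->
  A (setd e (setd d p s) t) -> ex_derive (fun z => u (setd e (setd d p s) z)) t.
Proof.
  intros Hu Hq. pose proof (smooth_ex_derive u e _ Hu Hq) as H. rewrite cd_setd in H.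
  eapply ex_derive_ext; [|exact H]. intros z. cbv beta. now rewrite setd_setd.
Qed.

Lemma Derive2_slice_fst u d e p s t : d <> e ->
  Derive (fun z => Derive (fun x => u (setd e (setd d p z) x)) t) s
  = dd d (dd e u) (setd e (setd d p s) t).
Proof.
  intros Hde. rewrite <- Derive_slice_fst by exact Hde.
  apply Derive_ext. intros z. apply Derive_slice_snd.
Qed.

Lemma Derive2_slice_snd u d e p s t : d <> e ->
  Derive (fun z => Derive (fun x => u (setd e (setd d p x) z)) s) t
  = dd e (dd d u) (setd e (setd d p s) t).
Proof.
  intros Hde. rewrite <- Derive_slice_snd.
  apply Derive_ext. intros z. now apply Derive_slice_fst.
Qed.

Lemma locally_2d_ex_derive_slice u d e p : smooth_on A u -> A p -> d <> e ->
  locally_2d (fun s t =>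
    ex_derive (fun z => u (setd e (setd d p z) t)) s /\
    ex_derive (fun z => u (setd e (setd d p s) z)) t /\
    ex_derive (fun z => Derive (fun x => u (setd e (setd d p z) x)) t) s /\
    ex_derive (fun z => Derive (fun x => u (setd e (setd d p x) z)) s) t) (cd d p) (cd e p).
Proof.
  intros Hu Hp Hde. assert (Hdu := smooth_dd u d Hu). assert (Heu := smooth_dd u e Hu).
  destruct (locally_2d_slice A HA d e p Hp) as [r Hr]. exists r. intros s t Hs Ht.
  specialize (Hr s t Hs Ht). split; [|split; [|split]].
  - now apply ex_derive_slice_fst.
  - now apply ex_derive_slice_snd.
  - apply (ex_derive_ext (fun z => dd e u (setd e (setd d p z) t))).
    + intros z. symmetry. apply Derive_slice_snd.
    + now apply ex_derive_slice_fst.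
  - apply (ex_derive_ext (fun z => dd d u (setd e (setd d p s) z))).
    + intros z. symmetry. now apply Derive_slice_fst.
    + now apply ex_derive_slice_snd.
Qed.

Lemma dd_comm u d e p : smooth_on A u -> A p -> dd d (dd e u) p = dd e (dd d u) p.
Proof.
  intros Hu Hp. destruct (dir_eq_dec d e) as [<-|Hde]; [reflexivity|].
  transitivity (Derive (fun z => Derive (fun x => u (setd e (setd d p z) x)) (cd e p)) (cd d p));
    [now rewrite Derive2_slice_fst, !setd_cd|].
  transitivity (Derive (fun z => Derive (fun x => u (setd e (setd d p x) z)) (cd d p)) (cd e p));
    [|now rewrite Derive2_slice_snd, !setd_cd].
  apply Schwarz; [now apply locally_2d_ex_derive_slice | |].
  - apply (continuity_2d_pt_ext (fun s t => dd d (dd e u) (setd e (setd d p s) t))).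
    + intros s t. now rewrite Derive2_slice_fst.
    + apply continuity_2d_pt_filterlim, continuous_slice.
      rewrite !setd_cd. apply smooth_cont; auto. now do 2 apply smooth_dd.
  - apply (continuity_2d_pt_ext (fun s t => dd e (dd d u) (setd e (setd d p s) t))).
    + intros s t. now rewrite Derive2_slice_snd.
    + apply continuity_2d_pt_filterlim, continuous_slice.
      rewrite !setd_cd. apply smooth_cont; auto. now do 2 apply smooth_dd.
Qed.

Lemma slice_differentiable u d e p : smooth_on A u -> A p -> d <> e ->
  differentiable_pt_lim (fun s t => u (setd e (setd d p s) t)) (cd d p) (cd e p)
    (dd d u p) (dd e u p).
Proof.
  intros Hu Hp Hde. apply filterdiff_differentiable_pt_lim.
  replace (dd d u p) with (dd d u (setd e (setd d p (cd d p)) (cd e p))) by now rewrite !setd_cd.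
  apply (is_derive_filterdiff (fun s t => u (setd e (setd d p s) t)) (cd d p) (cd e p)
           (fun s t => dd d u (setd e (setd d p s) t)) (dd e u p)).
  - apply (locally_2d_locally (fun s t =>
      is_derive (fun z => u (setd e (setd d p z) t)) s (dd d u (setd e (setd d p s) t)))).
    destruct (locally_2d_slice A HA d e p Hp) as [r Hr]. exists r. intros s t Hs Ht.
    rewrite <- Derive_slice_fst by exact Hde.
    apply Derive_correct, ex_derive_slice_fst; auto.
  - apply (is_derive_ext (fun t => u (setd e p t))); [intros t; now rewrite setd_cd|].
    now apply Derive_correct, smooth_ex_derive.
  - apply continuous_slice. rewrite !setd_cd. apply smooth_cont; auto. now apply smooth_dd.
Qed.

Lemma euler_homog u r p : smooth_on A u -> homog A r u -> A p ->
  sum2 (fun k => yc k p * dy k u p) = INR r * u p.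
Proof.
  intros Hu Hh Hp.
  set (phi := fun s t => u (setd (DY i2) (setd (DY i1) p s) t)).
  assert (Hscale : forall l, phi (l * yc i1 p) (l * yc i2 p) = u (scale l p)).
  { intros l. now destruct p as [[[? ?] ?] ?]. }
  assert (Hchain : is_derive (fun l => phi (l * yc i1 p) (l * yc i2 p)) 1
                     (sum2 (fun k => yc k p * dy k u p))).
  { apply is_derive_Reals.
    replace (sum2 (fun k => yc k p * dy k u p))
      with (dy i1 u p * yc i1 p + dy i2 u p * yc i2 p) by (unfold sum2; ring).
    apply derivable_pt_lim_comp_2d.
    - rewrite !Rmult_1_l. apply slice_differentiable; auto. congruence.
    - apply is_derive_Reals. auto_derive; auto; ring.
    - apply is_derive_Reals. auto_derive; auto; ring. }
  assert (Hpow : is_derive (fun l => l ^ r * u p) 1 (INR r * u p)).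
  { auto_derive; auto. rewrite pow1; ring. }
  rewrite <- (is_derive_unique _ _ _ Hchain), <- (is_derive_unique _ _ _ Hpow).
  apply Derive_ext_loc. exists (mkposreal 1 Rlt_0_1). intros l Hl.
  cbn in Hl. unfold AbsRing_ball, abs, minus, plus, opp in Hl; cbn in Hl.
  apply Rabs_def2 in Hl. rewrite Hscale. apply Hh; [exact Hp | lra].
Qed.
End Smooth.

Section Rules.
Variable A : pt -> Prop.
Hypothesis HA : open A.

Lemma dx_plus u v i p : smooth_on A u -> smooth_on A v -> A p ->
  dx i (fun q => u q + v q) p = dx i u p + dx i v p.
Proof. exact (dd_plus A u v (DX i) p). Qed.
Lemma dy_plus u v i p : smooth_on A u -> smooth_on A v -> A p ->
  dy i (fun q => u q + v q) p = dy i u p + dy i v p.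
Proof. exact (dd_plus A u v (DY i) p). Qed.
Lemma dy_minus u v i p : smooth_on A u -> smooth_on A v -> A p ->
  dy i (fun q => u q - v q) p = dy i u p - dy i v p.
Proof. exact (dd_minus A HA u v (DY i) p). Qed.
Lemma dx_mult u v i p : smooth_on A u -> smooth_on A v -> A p ->
  dx i (fun q => u q * v q) p = dx i u p * v p + u p * dx i v p.
Proof. exact (dd_mult A u v (DX i) p). Qed.
Lemma dy_mult u v i p : smooth_on A u -> smooth_on A v -> A p ->
  dy i (fun q => u q * v q) p = dy i u p * v p + u p * dy i v p.
Proof. exact (dd_mult A u v (DY i) p). Qed.
Lemma dx_inv u i p : smooth_on A u -> A p -> u p <> 0 ->
  dx i (fun q => / u q) p = - dx i u p / u p ^ 2.
Proof. exact (dd_inv A u (DX i) p). Qed.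
Lemma dy_inv u i p : smooth_on A u -> A p -> u p <> 0 ->
  dy i (fun q => / u q) p = - dy i u p / u p ^ 2.
Proof. exact (dd_inv A u (DY i) p). Qed.
Lemma dy_sum2 (w : I2 -> pt -> R) i p : (forall j, smooth_on A (w j)) -> A p ->
  dy i (fun q => sum2 (fun j => w j q)) p = sum2 (fun j => dy i (w j) p).
Proof. exact (dd_sum2 A w (DY i) p). Qed.
Lemma dx_loc u v i p : (forall q, A q -> u q = v q) -> A p -> dx i u p = dx i v p.
Proof. exact (dd_ext_loc A HA u v (DX i) p). Qed.
Lemma dy_loc u v i p : (forall q, A q -> u q = v q) -> A p -> dy i u p = dy i v p.
Proof. exact (dd_ext_loc A HA u v (DY i) p). Qed.
Lemma dy_zero u i p : (forall q, A q -> u q = 0) -> A p -> dy i u p = 0.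
Proof. exact (dd_zero A HA u (DY i) p). Qed.
Lemma dy_dy_comm u i j p : smooth_on A u -> A p -> dy i (dy j u) p = dy j (dy i u) p.
Proof. exact (dd_comm A HA u (DY i) (DY j) p). Qed.
Lemma dx_dy_comm u i j p : smooth_on A u -> A p -> dx i (dy j u) p = dy j (dx i u) p.
Proof. exact (dd_comm A HA u (DX i) (DY j) p). Qed.
End Rules.

Lemma dx_scal (c : R) u i p : dx i (fun q => c * u q) p = c * dx i u p.
Proof. exact (dd_scal c u (DX i) p). Qed.
Lemma dy_scal (c : R) u i p : dy i (fun q => c * u q) p = c * dy i u p.
Proof. exact (dd_scal c u (DY i) p). Qed.
Lemma dx_const (c : R) i p : dx i (fun _ => c) p = 0.
Proof. exact (dd_const (DX i) c p). Qed.
Lemma dy_const (c : R) i p : dy i (fun _ => c) p = 0.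
Proof. exact (dd_const (DY i) c p). Qed.
Lemma dx_ext u v i p : (forall q, u q = v q) -> dx i u p = dx i v p.
Proof. exact (dd_ext u v (DX i) p). Qed.
Lemma dy_ext u v i p : (forall q, u q = v q) -> dy i u p = dy i v p.
Proof. exact (dd_ext u v (DY i) p). Qed.

Lemma dx_yc i j p : dx i (yc j) p = 0.
Proof.
  change (dd (DX i) (cd (DY j)) p = 0). rewrite dd_cd. now destruct i, j.
Qed.

Definition kron (i j : I2) : R :=
  match i, j with i1, i1 | i2, i2 => 1 | _, _ => 0 end.

Lemma dy_yc i j p : dy i (yc j) p = kron i j.
Proof.
  change (dd (DY i) (cd (DY j)) p = kron i j). rewrite dd_cd. now destruct i, j.
Qed.

Ltac solve_smooth :=
  cbv beta;
  repeat first
    [ assumption | solve [auto]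
    | apply smooth_plus | apply smooth_minus | apply smooth_mult | apply smooth_opp
    | (apply smooth_sum2; intro) | apply smooth_dy | apply smooth_dx
    | apply smooth_yc | apply smooth_const ].

(* Infinitesimal homogeneity; unlike [homog] it is preserved by [dx] and [dy]. *)
Definition euler (A : pt -> Prop) (r : R) (u : pt -> R) : Prop :=
  forall q, A q -> sum2 (fun k => yc k q * dy k u q) = r * u q.

Section Euler.
Variable A : pt -> Prop.
Hypothesis HA : open A.

Lemma euler_of_homog u r : smooth_on A u -> homog A r u -> euler A (INR r) u.
Proof. intros Hu Hh q Hq. now apply (euler_homog A HA). Qed.

Lemma euler_deg u r s : r = s -> euler A r u -> euler A s u.
Proof. now intros <-. Qed.

Lemma euler_ext u v r : (forall q, A q -> u q = v q) -> euler A r u -> euler A r v.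
Proof.
  intros Huv Hu q Hq. rewrite <- Huv, <- Hu by exact Hq.
  unfold sum2. rewrite !(dy_loc A HA v u) by (auto; intros; symmetry; auto). reflexivity.
Qed.

Lemma euler_yc i : euler A 1 (yc i).
Proof. intros q Hq. unfold sum2. rewrite !dy_yc. destruct i; cbn; ring. Qed.

Lemma euler_plus u v r : smooth_on A u -> smooth_on A v ->
  euler A r u -> euler A r v -> euler A r (fun q => u q + v q).
Proof.
  intros Hu Hv Eu Ev q Hq. specialize (Eu q Hq). specialize (Ev q Hq).
  unfold sum2 in *. rewrite !(dy_plus A) by auto. lra.
Qed.

Lemma euler_minus u v r : smooth_on A u -> smooth_on A v ->
  euler A r u -> euler A r v -> euler A r (fun q => u q - v q).
Proof.
  intros Hu Hv Eu Ev q Hq. specialize (Eu q Hq). specialize (Ev q Hq).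
  unfold sum2 in *. rewrite !(dy_minus A HA) by auto. lra.
Qed.

Lemma euler_mult u v r s : smooth_on A u -> smooth_on A v ->
  euler A r u -> euler A s v -> euler A (r + s) (fun q => u q * v q).
Proof.
  intros Hu Hv Eu Ev q Hq. specialize (Eu q Hq). specialize (Ev q Hq).
  unfold sum2 in *. rewrite !(dy_mult A) by auto.
  transitivity ((yc i1 q * dy i1 u q + yc i2 q * dy i2 u q) * v q +
                u q * (yc i1 q * dy i1 v q + yc i2 q * dy i2 v q)); [ring|].
  rewrite Eu, Ev. ring.
Qed.

Lemma euler_scal (c : R) u r : euler A r u -> euler A r (fun q => c * u q).
Proof.
  intros Eu q Hq. specialize (Eu q Hq). unfold sum2 in *. rewrite !dy_scal.
  transitivity (c * (yc i1 q * dy i1 u q + yc i2 q * dy i2 u q)); [ring|].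
  rewrite Eu. ring.
Qed.

Lemma euler_opp u r : euler A r u -> euler A r (fun q => - u q).
Proof.
  intros Eu. apply (euler_ext (fun q => -1 * u q)); [intros; ring|]. now apply euler_scal.
Qed.

Lemma euler_inv u r : smooth_on A u -> (forall q, A q -> u q <> 0) ->
  euler A r u -> euler A (- r) (fun q => / u q).
Proof.
  intros Hu Hnz Eu q Hq. specialize (Hnz q Hq). specialize (Eu q Hq).
  unfold sum2 in *. rewrite !(dy_inv A) by auto.
  transitivity (- (yc i1 q * dy i1 u q + yc i2 q * dy i2 u q) / u q ^ 2); [field; auto|].
  rewrite Eu. field. auto.
Qed.

Lemma euler_div u v r s : smooth_on A u -> smooth_on A v -> (forall q, A q -> v q <> 0) ->
  euler A r u -> euler A s v -> euler A (r - s) (fun q => u q / v q).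
Proof.
  intros Hu Hv Hnz Eu Ev. apply euler_mult; auto.
  - now apply smooth_inv.
  - now apply euler_inv.
Qed.

Lemma euler_sum2 (w : I2 -> pt -> R) r : (forall j, smooth_on A (w j)) ->
  (forall j, euler A r (w j)) -> euler A r (fun q => sum2 (fun j => w j q)).
Proof. intros Hw Ew. apply euler_plus; auto. Qed.

Lemma euler_dy u r h : smooth_on A u -> euler A r u -> euler A (r - 1) (dy h u).
Proof.
  intros Hu Eu q Hq. assert (D := dy_loc A HA _ _ h q Eu Hq). cbv beta in D.
  unfold sum2 in D |- *.
  rewrite (dy_plus A), !(dy_mult A), !dy_yc, dy_const in D by solve_smooth.
  rewrite (dy_dy_comm A HA u h i1), (dy_dy_comm A HA u h i2) in D by auto.
  destruct h; cbn [kron] in D; lra.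
Qed.

Lemma euler_dx u r h : smooth_on A u -> euler A r u -> euler A r (dx h u).
Proof.
  intros Hu Eu q Hq. assert (D := dx_loc A HA _ _ h q Eu Hq). cbv beta in D.
  unfold sum2 in D |- *.
  rewrite (dx_plus A), !(dx_mult A), !dx_yc, dx_const in D by solve_smooth.
  rewrite (dx_dy_comm A HA u h i1), (dx_dy_comm A HA u h i2) in D by auto.
  lra.
Qed.
End Euler.

Lemma det2_kernel (a b c d x y : R) : a * d - b * c <> 0 ->
  a * x + b * y = 0 -> c * x + d * y = 0 -> x = 0 /\ y = 0.
Proof.
  intros Hdet H1 H2. split; apply (Rmult_eq_reg_r (a * d - b * c)); auto.
  - transitivity (d * (a * x + b * y) - b * (c * x + d * y)); [ring|]. rewrite H1, H2; ring.
  - transitivity (a * (c * x + d * y) - c * (a * x + b * y)); [ring|]. rewrite H1, H2; ring.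
Qed.

Lemma sym_prod_zero (X Y : I2 -> R) : Y i1 <> 0 \/ Y i2 <> 0 ->
  (forall j i, X j * Y i + Y j * X i = 0) -> forall a, X a = 0.
Proof.
  intros HY H a. destruct HY as [Hc|Hc].
  - assert (X1 : X i1 = 0).
    { specialize (H i1 i1). apply (Rmult_eq_reg_r (Y i1)); auto. lra. }
    specialize (H a i1). rewrite X1 in H. apply (Rmult_eq_reg_r (Y i1)); auto. lra.
  - assert (X2 : X i2 = 0).
    { specialize (H i2 i2). apply (Rmult_eq_reg_r (Y i2)); auto. lra. }
    specialize (H a i2). rewrite X2 in H. apply (Rmult_eq_reg_r (Y i2)); auto. lra.
Qed.

Section Finsler.
Variables (A : pt -> Prop) (F : pt -> R).
Hypothesis HA : open A.
Hypothesis HF : smooth_on A F.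
Hypothesis Hhom : homog A 1 F.
Hypothesis Hdet : forall p, A p -> detg F p <> 0.
Hypothesis Hy : forall p, A p -> yc i1 p <> 0 \/ yc i2 p <> 0.

Definition spray_rhs (l : I2) (p : pt) : R :=
  sum2 (fun k => yc k p * dx k (dy l (F2 F)) p) - dx l (F2 F) p.

Lemma Gs_spray_rhs i p : Gs F i p = / 4 * sum2 (fun l => ginv F i l p * spray_rhs l p).
Proof. reflexivity. Qed.

Definition berwald (l i k : I2) : pt -> R := dy k (Gij F l i).

Lemma Gij_dy l i : Gij F l i = dy i (Gs F l).
Proof. reflexivity. Qed.

Lemma smooth_F2 : smooth_on A (F2 F).
Proof.
  apply (smooth_ext A HA (fun q => F q * F q)); [intros; unfold F2; ring|].
  now apply smooth_mult.
Qed.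
#[local] Hint Resolve smooth_F2 : core.

Lemma smooth_g i j : smooth_on A (g F i j).
Proof. unfold g. solve_smooth. Qed.
#[local] Hint Resolve smooth_g : core.

Lemma smooth_ginv i j : smooth_on A (ginv F i j).
Proof. destruct i, j; apply (smooth_div A HA); unfold detg; solve_smooth. Qed.
#[local] Hint Resolve smooth_ginv : core.

Lemma smooth_spray_rhs l : smooth_on A (spray_rhs l).
Proof. unfold spray_rhs. solve_smooth. Qed.
#[local] Hint Resolve smooth_spray_rhs : core.

Lemma smooth_Gs i : smooth_on A (Gs F i).
Proof. unfold Gs. solve_smooth. Qed.
#[local] Hint Resolve smooth_Gs : core.

Lemma smooth_Gij l i : smooth_on A (Gij F l i).
Proof. unfold Gij. solve_smooth. Qed.
#[local] Hint Resolve smooth_Gij : core.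

Lemma smooth_berwald l i k : smooth_on A (berwald l i k).
Proof. unfold berwald. solve_smooth. Qed.
#[local] Hint Resolve smooth_berwald : core.

Lemma euler_F : euler A 1 F.
Proof. exact (euler_of_homog A HA F 1 HF Hhom). Qed.

Lemma euler_F2 : euler A 2 (F2 F).
Proof.
  apply (euler_ext A HA (fun q => F q * F q)); [intros; unfold F2; ring|].
  apply (euler_deg A _ (1 + 1)); [ring|]. apply euler_mult; auto using euler_F.
Qed.

Lemma euler_g i j : euler A 0 (g F i j).
Proof.
  apply euler_scal, (euler_deg A _ (2 - 1 - 1)); [ring|].
  apply (euler_dy A HA); [solve_smooth|]. apply (euler_dy A HA); auto using euler_F2.
Qed.

Lemma euler_detg : euler A 0 (detg F).
Proof.
  apply (euler_minus A HA); [unfold detg; solve_smooth .. | |];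
    apply (euler_deg A _ (0 + 0)); try ring; apply euler_mult; auto using euler_g.
Qed.

Lemma euler_ginv i j : euler A 0 (ginv F i j).
Proof.
  destruct i, j; apply (euler_deg A _ (0 - 0)); try ring;
    apply (euler_div A HA); unfold detg; solve_smooth;
    auto using euler_g, euler_detg, euler_opp.
Qed.

Lemma euler_spray_rhs l : euler A 2 (spray_rhs l).
Proof.
  apply (euler_minus A HA); [solve_smooth .. | |].
  - apply euler_sum2; [intros; solve_smooth|]. intros k.
    apply (euler_deg A _ (1 + 1)); [ring|].
    apply euler_mult; [solve_smooth .. | apply euler_yc|].
    apply (euler_dx A HA); [solve_smooth|].
    apply (euler_deg A _ (2 - 1)); [ring|]. apply (euler_dy A HA); auto using euler_F2.
  - apply (euler_dx A HA); auto using euler_F2.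
Qed.

Lemma euler_Gs i : euler A 2 (Gs F i).
Proof.
  apply euler_scal, euler_sum2; [intros; solve_smooth|]. intros l.
  apply (euler_deg A _ (0 + 2)); [ring|].
  apply (euler_mult A (ginv F i l) (spray_rhs l)); auto using euler_ginv, euler_spray_rhs.
Qed.

Lemma euler_Gij l i : euler A 1 (Gij F l i).
Proof. apply (euler_deg A _ (2 - 1)); [ring|]. apply (euler_dy A HA); auto using euler_Gs. Qed.

Lemma euler_berwald l i k : euler A 0 (berwald l i k).
Proof. apply (euler_deg A _ (1 - 1)); [ring|]. apply (euler_dy A HA); auto using euler_Gij. Qed.

Lemma g_sym i j p : A p -> g F i j p = g F j i p.
Proof. intros Hp. unfold g. now rewrite (dy_dy_comm A HA). Qed.

Lemma dy_F2_g l q : A q -> dy l (F2 F) q = 2 * sum2 (fun j => g F l j q * yc j q).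
Proof.
  intros Hq. assert (E := euler_dy A HA (F2 F) 2 l smooth_F2 euler_F2 q Hq).
  unfold sum2, g in *.
  rewrite (dy_dy_comm A HA (F2 F) i1 l), (dy_dy_comm A HA (F2 F) i2 l) in E by auto.
  lra.
Qed.

Lemma dy_F2 l q : A q -> dy l (F2 F) q = 2 * F q * dy l F q.
Proof.
  intros Hq. rewrite (dy_ext (F2 F) (fun q => F q * F q)) by (intros; unfold F2; ring).
  rewrite (dy_mult A) by auto. ring.
Qed.

(* [g_lj y^j = F dy_l F], and [g] is nondegenerate. *)
Lemma F_neq0 p : A p -> F p <> 0.
Proof.
  intros Hp HF0. assert (E1 := dy_F2_g i1 p Hp). assert (E2 := dy_F2_g i2 p Hp).
  rewrite dy_F2, HF0 in E1, E2 by exact Hp. unfold sum2 in E1, E2.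
  destruct (det2_kernel (g F i1 i1 p) (g F i1 i2 p) (g F i2 i1 p) (g F i2 i2 p)
              (yc i1 p) (yc i2 p)) as [Hy1 Hy2]; [exact (Hdet p Hp) | lra | lra |].
  destruct (Hy p Hp); contradiction.
Qed.

Lemma g_Gs j q : A q -> sum2 (fun i => g F j i q * Gs F i q) = / 4 * spray_rhs j q.
Proof.
  intros Hq. specialize (Hdet q Hq).
  unfold sum2 at 1. rewrite !Gs_spray_rhs. unfold sum2, ginv. unfold detg in *.
  destruct j; field; exact Hdet.
Qed.

Lemma Gs_dy_F2 q : A q ->
  sum2 (fun l => Gs F l q * dy l (F2 F) q) = / 2 * sum2 (fun k => yc k q * dx k (F2 F) q).
Proof.
  intros Hq. unfold sum2 at 1. rewrite !dy_F2_g by exact Hq.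
  transitivity (2 * (yc i1 q * sum2 (fun i => g F i1 i q * Gs F i q)
                   + yc i2 q * sum2 (fun i => g F i2 i q * Gs F i q))).
  { unfold sum2. rewrite (g_sym i2 i1) by exact Hq. ring. }
  rewrite !g_Gs by exact Hq. unfold spray_rhs, sum2.
  assert (E1 := euler_dx A HA _ _ i1 smooth_F2 euler_F2 q Hq).
  assert (E2 := euler_dx A HA _ _ i2 smooth_F2 euler_F2 q Hq).
  unfold sum2 in E1, E2. rewrite <- !(dx_dy_comm A HA (F2 F)) in E1, E2 by auto.
  nra.
Qed.

Lemma delta_F2 h p : A p -> delta F h (F2 F) p = 0.
Proof.
  intros Hp. assert (D := dy_loc A HA _ _ h p Gs_dy_F2 Hp). cbv beta in D.
  rewrite (dy_sum2 A), dy_scal, (dy_sum2 A) in D by (intros; solve_smooth).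
  unfold sum2 in D. rewrite !(dy_mult A), !dy_yc in D by solve_smooth.
  rewrite <- !(dx_dy_comm A HA (F2 F)) in D by auto.
  assert (E := g_Gs h p Hp). unfold sum2, g, spray_rhs in E.
  unfold delta, Gij, sum2. destruct h; cbn [kron] in D; unfold sum2 in E; lra.
Qed.

Lemma delta_plus k u v p : smooth_on A u -> smooth_on A v -> A p ->
  delta F k (fun q => u q + v q) p = delta F k u p + delta F k v p.
Proof. intros Hu Hv Hp. unfold delta, sum2. rewrite (dx_plus A), !(dy_plus A) by auto. ring. Qed.

Lemma delta_mult k u v p : smooth_on A u -> smooth_on A v -> A p ->
  delta F k (fun q => u q * v q) p = delta F k u p * v p + u p * delta F k v p.
Proof. intros Hu Hv Hp. unfold delta, sum2. rewrite (dx_mult A), !(dy_mult A) by auto. ring. Qed.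

Lemma delta_scal k (c : R) u p : delta F k (fun q => c * u q) p = c * delta F k u p.
Proof. unfold delta, sum2. rewrite dx_scal, !dy_scal. ring. Qed.

Lemma delta_const k (c : R) p : delta F k (fun _ => c) p = 0.
Proof. unfold delta, sum2. rewrite dx_const, !dy_const. ring. Qed.

Lemma delta_inv k u p : smooth_on A u -> A p -> u p <> 0 ->
  delta F k (fun q => / u q) p = - delta F k u p / u p ^ 2.
Proof.
  intros Hu Hp Hnz. unfold delta, sum2. rewrite (dx_inv A), !(dy_inv A) by auto.
  field. exact Hnz.
Qed.

Lemma delta_sum2 k (w : I2 -> pt -> R) p : (forall j, smooth_on A (w j)) -> A p ->
  delta F k (fun q => sum2 (fun j => w j q)) p = sum2 (fun j => delta F k (w j) p).
Proof. intros Hw Hp. apply delta_plus; auto. Qed.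

Lemma delta_loc k u v p : (forall q, A q -> u q = v q) -> A p -> delta F k u p = delta F k v p.
Proof.
  intros Huv Hp. unfold delta, sum2.
  now rewrite (dx_loc A HA u v), (dy_loc A HA u v i1), (dy_loc A HA u v i2).
Qed.

Lemma delta_ext k u v p : (forall q, u q = v q) -> delta F k u p = delta F k v p.
Proof.
  intros Huv. unfold delta, sum2.
  now rewrite (dx_ext u v), (dy_ext u v i1), (dy_ext u v i2).
Qed.

Lemma delta_F h p : A p -> delta F h F p = 0.
Proof.
  intros Hp. assert (E := delta_F2 h p Hp).
  rewrite (delta_ext h (F2 F) (fun q => F q * F q)), delta_mult in E
    by (auto; intros; unfold F2; ring).
  assert (Fn := F_neq0 p Hp). apply (Rmult_eq_reg_l (2 * F p)); [lra|].
  intros H0. apply Fn. lra.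
Qed.

Lemma dy_delta h k u p : smooth_on A u -> A p ->
  dy h (delta F k u) p = delta F k (dy h u) p - sum2 (fun l => berwald l k h p * dy l u p).
Proof.
  intros Hu Hp. unfold delta at 1.
  rewrite (dy_minus A HA), (dy_sum2 A) by (intros; solve_smooth).
  unfold sum2. rewrite !(dy_mult A) by solve_smooth.
  unfold delta, berwald, sum2.
  rewrite (dx_dy_comm A HA u k h), (dy_dy_comm A HA u h i1), (dy_dy_comm A HA u h i2) by auto.
  ring.
Qed.

Lemma delta_dy_horiz u i k : smooth_on A u -> (forall q, A q -> delta F k u q = 0) ->
  forall p, A p -> delta F k (dy i u) p = sum2 (fun l => berwald l k i p * dy l u p).
Proof.
  intros Hu Hk p Hp. assert (H := dy_delta i k u p Hu Hp).
  rewrite (dy_zero A HA) in H by auto. lra.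
Qed.

(* [cov_g j i k] is the Berwald covariant derivative [g_ji|k]. *)
Definition cov_g (j i k : I2) (p : pt) : R :=
  delta F k (g F j i) p - sum2 (fun l => berwald l k j p * g F l i p)
  - sum2 (fun l => berwald l k i p * g F j l p).

(* [cov0_Cart h j i] is [C_hji|0 = y^k C_hji|k]. *)
Definition cov0_Cart (h j i : I2) (p : pt) : R :=
  sum2 (fun k => yc k p * delta F k (Cart F h j i) p)
  - sum2 (fun l => Gij F l h p * Cart F l j i p + Gij F l j p * Cart F h l i p
                   + Gij F l i p * Cart F h j l p).

Lemma dy_g_Cart h j i q : dy h (g F j i) q = 2 * Cart F h j i q.
Proof. unfold g at 1. rewrite dy_scal. unfold Cart. field. Qed.

Lemma cov_g_berwald j i k q : A q ->
  2 * cov_g j i k q = sum2 (fun l => dy j (berwald l k i) q * dy l (F2 F) q).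
Proof.
  intros Hq. assert (E := delta_dy_horiz (F2 F) i k smooth_F2 (delta_F2 k)).
  assert (D := dy_loc A HA _ _ j q E Hq). cbv beta in D.
  rewrite dy_delta, (dy_sum2 A) in D by (intros; solve_smooth).
  unfold sum2 in D. rewrite !(dy_mult A) in D by solve_smooth.
  rewrite (delta_ext k (dy j (dy i (F2 F))) (fun q => 2 * g F j i q)), delta_scal in D
    by (intros; unfold g; field).
  unfold cov_g, sum2. unfold g at 2 3 4 5. lra.
Qed.

Lemma y_berwald l a q : A q -> sum2 (fun k => yc k q * berwald l k a q) = Gij F l a q.
Proof.
  intros Hq. assert (E := euler_Gij l a q Hq). unfold sum2, berwald in *. rewrite !Gij_dy in *.
  rewrite (dy_dy_comm A HA (Gs F l) a i1), (dy_dy_comm A HA (Gs F l) a i2) by auto.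
  lra.
Qed.

Lemma y_dy_berwald l h a q : A q -> sum2 (fun k => yc k q * dy h (berwald l k a) q) = 0.
Proof.
  intros Hq. assert (E := euler_berwald l a h q Hq). rewrite Rmult_0_l in E.
  assert (S : forall k, dy h (berwald l k a) q = dy k (berwald l a h) q).
  { intros k. unfold berwald. rewrite !Gij_dy.
    rewrite (dy_loc A HA (dy a (dy k (Gs F l))) (dy k (dy a (Gs F l))))
      by (auto; intros; apply (dy_dy_comm A HA); auto).
    apply (dy_dy_comm A HA); solve_smooth. }
  unfold sum2 in *. rewrite !S. exact E.
Qed.

Lemma y_cov_g j i q : A q -> sum2 (fun k => yc k q * cov_g j i k q) = 0.
Proof.
  intros Hq. apply (Rmult_eq_reg_l 2); [|lra].
  assert (L1 := cov_g_berwald j i i1 q Hq). assert (L2 := cov_g_berwald j i i2 q Hq).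
  assert (Y1 := y_dy_berwald i1 j i q Hq). assert (Y2 := y_dy_berwald i2 j i q Hq).
  unfold sum2 in *.
  transitivity (yc i1 q * (2 * cov_g j i i1 q) + yc i2 q * (2 * cov_g j i i2 q)); [ring|].
  rewrite L1, L2.
  transitivity ((yc i1 q * dy j (berwald i1 i1 i) q + yc i2 q * dy j (berwald i1 i2 i) q)
                  * dy i1 (F2 F) q
              + (yc i1 q * dy j (berwald i2 i1 i) q + yc i2 q * dy j (berwald i2 i2 i) q)
                  * dy i2 (F2 F) q); [ring|].
  rewrite Y1, Y2. ring.
Qed.

Lemma dy_cov_g h j i k p : A p ->
  dy h (cov_g j i k) p = 2 * delta F k (Cart F h j i) p
    - sum2 (fun l => berwald l k h p * (2 * Cart F l j i p))
    - sum2 (fun l => dy h (berwald l k j) p * g F l i p + berwald l k j p * (2 * Cart F h l i p))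
    - sum2 (fun l => dy h (berwald l k i) p * g F j l p + berwald l k i p * (2 * Cart F h j l p)).
Proof.
  intros Hp. unfold cov_g.
  rewrite !(dy_minus A HA), !(dy_sum2 A) by (intros; solve_smooth).
  unfold sum2 at 1 2. rewrite !(dy_mult A) by auto.
  rewrite dy_delta by auto. rewrite !dy_g_Cart.
  rewrite (delta_ext k (dy h (g F j i)) (fun q => 2 * Cart F h j i q)) by (intros; apply dy_g_Cart).
  rewrite delta_scal. unfold sum2. rewrite !dy_g_Cart. ring.
Qed.

Lemma y_dy_cov_g h j i p : A p ->
  sum2 (fun k => yc k p * dy h (cov_g j i k) p) = 2 * cov0_Cart h j i p.
Proof.
  intros Hp.
  pose (Yb l a := sum2 (fun k => yc k p * berwald l k a p)).
  pose (Yd l a := sum2 (fun k => yc k p * dy h (berwald l k a) p)).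
  assert (HYb : forall l a, Yb l a = Gij F l a p) by (intros; now apply y_berwald).
  assert (HYd : forall l a, Yd l a = 0) by (intros; now apply y_dy_berwald).
  transitivity (2 * sum2 (fun k => yc k p * delta F k (Cart F h j i) p)
    - 2 * sum2 (fun l => Yb l h * Cart F l j i p) - sum2 (fun l => Yd l j * g F l i p)
    - 2 * sum2 (fun l => Yb l j * Cart F h l i p) - sum2 (fun l => Yd l i * g F j l p)
    - 2 * sum2 (fun l => Yb l i * Cart F h j l p)).
  - unfold sum2 at 1. rewrite !dy_cov_g by exact Hp. unfold Yb, Yd, sum2. ring.
  - unfold sum2. rewrite !HYb, !HYd. unfold cov0_Cart, sum2. ring.
Qed.

Lemma cov_g_Cart j i h p : A p -> cov_g j i h p = -2 * cov0_Cart h j i p.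
Proof.
  intros Hp. assert (D := dy_zero A HA _ h p (y_cov_g j i) Hp).
  rewrite (dy_sum2 A) in D by (intros; solve_smooth). unfold sum2 in D.
  rewrite !(dy_mult A), !dy_yc in D by solve_smooth.
  assert (S := y_dy_cov_g h j i p Hp). unfold sum2 in S.
  destruct h; cbn [kron] in D; lra.
Qed.

Lemma cov_g_zero_of_Cart j i k p : A p -> (forall h j i, cov0_Cart h j i p = 0) ->
  cov_g j i k p = 0.
Proof. intros Hp HC0. rewrite cov_g_Cart, HC0 by exact Hp. ring. Qed.

Section Frame.
Variables (eps : R) (m : I2 -> pt -> R) (I : pt -> R).
Hypothesis Heps : eps = 1 \/ eps = -1.
Hypothesis Hm : forall i, smooth_on A (m i).
Hypothesis HI : smooth_on A I.
Hypothesis Hg : forall p i j, A p ->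
  g F i j p = ell_low F i p * ell_low F j p + eps * m i p * m j p.
Hypothesis HC : forall p i j k, A p -> F p * Cart F i j k p = I p * m i p * m j p * m k p.
Hypothesis HL : forall p, A p -> comma1 F I p = 0.
#[local] Hint Resolve Hm HI : core.

Lemma eps_neq0 : eps <> 0.
Proof. destruct Heps; lra. Qed.

Lemma m_neq0 p : A p -> m i1 p <> 0 \/ m i2 p <> 0.
Proof.
  intros Hp. destruct (Req_dec (m i1 p) 0) as [H1|H1]; [|now left].
  destruct (Req_dec (m i2 p) 0) as [H2|H2]; [|now right].
  exfalso. apply (Hdet p Hp). unfold detg. rewrite !Hg, H1, H2 by exact Hp. ring.
Qed.

(* [cov_m a k] is the Berwald covariant derivative [m_a|k]. *)
Definition cov_m (a k : I2) (p : pt) : R :=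
  delta F k (m a) p - sum2 (fun l => berwald l k a p * m l p).

(* [l_j|k = 0] as [F] is horizontally constant, so only the [m m] part of [g] survives. *)
Lemma cov_g_frame j i k p : A p ->
  cov_g j i k p = eps * (cov_m j k p * m i p + m j p * cov_m i k p).
Proof.
  intros Hp. unfold cov_g.
  rewrite (delta_loc k (g F j i) (fun q => dy j F q * dy i F q + eps * m j q * m i q))
    by (auto; intros; now rewrite Hg).
  rewrite delta_plus, !delta_mult, delta_const by solve_smooth.
  rewrite !(delta_dy_horiz F) by (auto; intros; now apply delta_F).
  unfold cov_m, sum2. rewrite !Hg by exact Hp. unfold ell_low. ring.
Qed.

Lemma y_cov_m a p : A p -> sum2 (fun k => yc k p * cov_m a k p) = 0.
Proof.
  intros Hp. revert a.
  apply (sym_prod_zero (fun a => sum2 (fun k => yc k p * cov_m a k p)) (fun i => m i p));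
    [now apply m_neq0|]. intros j i. assert (H := y_cov_g j i p Hp). unfold sum2 in H |- *.
  rewrite !cov_g_frame in H by exact Hp.
  apply (Rmult_eq_reg_l eps); [lra | apply eps_neq0].
Qed.

Lemma Cart_frame h j i q : A q -> Cart F h j i q = I q * m h q * m j q * m i q / F q.
Proof. intros Hq. rewrite <- HC by exact Hq. field. now apply F_neq0. Qed.

Lemma delta_Cart h j i k p : A p ->
  delta F k (Cart F h j i) p =
  (delta F k I p * m h p * m j p * m i p + I p * delta F k (m h) p * m j p * m i p
   + I p * m h p * delta F k (m j) p * m i p + I p * m h p * m j p * delta F k (m i) p) / F p.
Proof.
  intros Hp. assert (Fn := F_neq0 p Hp).
  rewrite (delta_loc k _ (fun q => I q * m h q * m j q * m i q * / F q))
    by (auto; intros; now apply Cart_frame).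
  rewrite !delta_mult by (auto; solve_smooth; apply (smooth_inv A HA); auto; apply F_neq0).
  rewrite delta_inv, delta_F by auto. field. exact Fn.
Qed.

Lemma y_delta_I p : A p -> sum2 (fun k => yc k p * delta F k I p) = 0.
Proof.
  intros Hp. assert (H := HL p Hp). assert (Fn := F_neq0 p Hp).
  unfold comma1, ell_up, sum2 in *.
  apply (Rmult_eq_reg_l (/ F p)); [|now apply Rinv_neq_0_compat].
  rewrite Rmult_0_r, <- H. field. exact Fn.
Qed.

(* The Landsberg condition enters here: [C_hji|0] only involves [I_,1] and [m_a|0]. *)
Lemma cov0_Cart_zero h j i p : A p -> cov0_Cart h j i p = 0.
Proof.
  intros Hp. assert (Fn := F_neq0 p Hp).
  pose (Z a := sum2 (fun k => yc k p * cov_m a k p)).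
  assert (E : cov0_Cart h j i p =
      sum2 (fun k => yc k p * delta F k I p) * m h p * m j p * m i p / F p
      + I p / F p * (Z h * m j p * m i p + m h p * Z j * m i p + m h p * m j p * Z i)).
  { unfold cov0_Cart, sum2. rewrite !delta_Cart by exact Hp.
    repeat rewrite <- (y_berwald _ _ p Hp). rewrite !Cart_frame by exact Hp.
    unfold Z, cov_m, sum2. field. exact Fn. }
  rewrite E. unfold Z. rewrite y_delta_I, !y_cov_m by exact Hp. field. exact Fn.
Qed.

Lemma cov_m_zero a k p : A p -> cov_m a k p = 0.
Proof.
  intros Hp. revert a.
  apply (sym_prod_zero (fun a => cov_m a k p) (fun i => m i p)); [now apply m_neq0|].
  intros j i.
  assert (H := cov_g_zero_of_Cart j i k p Hp (fun h j i => cov0_Cart_zero h j i p Hp)).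
  rewrite cov_g_frame in H by exact Hp.
  apply (Rmult_eq_reg_l eps); [lra | apply eps_neq0].
Qed.

Lemma smooth_mup i : smooth_on A (mup F m i).
Proof. unfold mup. solve_smooth. Qed.
#[local] Hint Resolve smooth_mup : core.

Lemma smooth_semi2 u : smooth_on A u -> smooth_on A (semi2 F eps m u).
Proof. intros Hu. unfold semi2. solve_smooth. Qed.

Lemma m_mup a q : A q -> m a q = sum2 (fun b => g F a b q * mup F m b q).
Proof.
  intros Hq. specialize (Hdet q Hq). unfold mup, ginv, sum2. unfold detg in *.
  destruct a; field; exact Hdet.
Qed.

Lemma delta_g a b k p : A p -> delta F k (g F a b) p =
  sum2 (fun l => berwald l k a p * g F l b p) + sum2 (fun l => berwald l k b p * g F a l p).
Proof.
  intros Hp. assert (H := cov_g_zero_of_Cart a b k p Hp (fun h j i => cov0_Cart_zero h j i p Hp)).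
  unfold cov_g in H. lra.
Qed.

Lemma delta_m a k p : A p -> delta F k (m a) p = sum2 (fun l => berwald l k a p * m l p).
Proof. intros Hp. assert (H := cov_m_zero a k p Hp). unfold cov_m in H. lra. Qed.

(* Raising the index with the parallel metric keeps [m] parallel. *)
Lemma cov_mup_zero k p b : A p ->
  delta F k (mup F m b) p + sum2 (fun c => berwald b k c p * mup F m c p) = 0.
Proof.
  intros Hp.
  pose (N b := delta F k (mup F m b) p + sum2 (fun c => berwald b k c p * mup F m c p)).
  assert (K : forall a, sum2 (fun b => g F a b p * N b) = 0).
  { intros a. assert (D := delta_loc k (m a) _ p (m_mup a) Hp).
    rewrite delta_sum2 in D by (auto; intros; solve_smooth). unfold sum2 in D.
    rewrite !delta_mult, delta_m, !delta_g in D by auto.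
    unfold sum2 in D. rewrite !(m_mup _ p Hp) in D. unfold N, sum2 in D |- *. lra. }
  assert (K1 := K i1). assert (K2 := K i2). unfold sum2 in K1, K2.
  destruct (det2_kernel _ _ _ _ (N i1) (N i2) (Hdet p Hp) K1 K2) as [N1 N2].
  destruct b; [exact N1 | exact N2].
Qed.

Lemma horiz_const_semi2 u : smooth_on A u -> horiz_const A F u ->
  horiz_const A F (semi2 F eps m u).
Proof.
  intros Hu Hk p k Hp. unfold semi2.
  rewrite !delta_mult by solve_smooth. rewrite delta_const, delta_F by exact Hp.
  rewrite delta_sum2 by (auto; intros; solve_smooth). unfold sum2.
  rewrite !delta_mult, !(delta_dy_horiz u) by (auto; intros; solve_smooth).
  pose (N b := delta F k (mup F m b) p + sum2 (fun c => berwald b k c p * mup F m c p)).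
  transitivity (eps * F p * (N i1 * dy i1 u p + N i2 * dy i2 u p)).
  - unfold N, sum2. ring.
  - unfold N. rewrite !cov_mup_zero by exact Hp. ring.
Qed.
End Frame.
End Finsler.

Theorem lemma2p4 (A : pt -> Prop) (F : pt -> R) (eps : R)
  (m : I2 -> pt -> R) (I : pt -> R) (f : pt -> R) :
  pseudo_finsler A F ->
  berwald_frame A F eps m I ->
  (forall p, A p -> comma1 F I p = 0) ->   (* Landsberg: I_{,1} = 0 *)
  smooth_on A f -> homog A 0 f ->
  horiz_const A F f ->
  horiz_const A F (semi2 F eps m f) /\
  horiz_const A F (semi2 F eps m (semi2 F eps m f)).
Proof.
  intros [[HA [Hy _]] [HF [Hhom Hdet]]] [Heps [Hm [HI [Hg HC]]]] HL Hf _ Hhc.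
  assert (Hstep := horiz_const_semi2 A F HA HF Hhom Hdet Hy eps m I Heps Hm HI Hg HC HL).
  split.
  - now apply Hstep.
  - apply Hstep; [|now apply Hstep]. now apply (smooth_semi2 A F HA HF Hdet).
Qed.
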